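(* Let \(D\) be a bornological \(V\)-algebra and let \(D'\) be \(D\) with the compactoid bornology. Then \(D'\) is again a bornological \(V\)-algebra. If \(D\) is semidagger, then so is \(D'\).
   Context: Let \(V\) be a complete discrete valuation ring with uniformiser \(\pi\). A bornology on a set is a collection of subsets (called bounded) containing all finite subsets and closed under finite unions and under taking subsets. A bornological \(V\)-module is a \(V\)-module with a bornology such that every bounded subset is contained in a bounded \(V\)-submodule. A bornological \(V\)-algebra is a \(V\)-algebra with such a bornology for which multiplication is bounded (if \(S,T\) are bounded then so is \(S\cdot T\)). It is semidagger if for every bounded subset \(S\subseteq D\), the \(V\)-submodule \(\sum_{i=0}^\infty \pi^i S^{i+1}\) (generated by all products \(\pi^i s_0\cdots s_i\) with \(s_j\in S\)) is bounded. A subset \(S\subseteq D\) is compactoid if there is a bounded \(V\)-submodule \(T\subseteq D\) with \(S\subseteq T\) such that for every \(n\in\mathbb N\) there is a finite set \(F_n\subseteq T\) with \(S\subseteq VF_n+\pi^nT\); the compactoid bornology consists of the compactoid subsets. *)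

From HB Require Import structures.
From mathcomp Require Import all_boot all_order all_algebra.
From mathcomp Require Import boolp classical_sets.
Set Implicit Arguments. Unset Strict Implicit. Unset Printing Implicit Defensive.
Import Order.TTheory GRing.Theory Num.Theory.
Local Open Scope ring_scope.
Local Open Scope classical_set_scope.

Definition is_dvr_uniformiser (V : idomainType) (pi : V) : Prop :=
  [/\ pi != 0, pi \isn't a GRing.unit &
      forall x : V, x != 0 -> exists (u : V) (n : nat), u \is a GRing.unit /\ x = u * pi ^+ n].

Definition pi_div (V : idomainType) (pi : V) (n : nat) (x : V) : Prop :=
  exists y : V, x = pi ^+ n * y.

(* pi-adic completeness: every pi-adic Cauchy sequence converges. *)
Definition pi_complete (V : idomainType) (pi : V) : Prop :=
  forall a : nat -> V, (forall n, pi_div pi n (a n.+1 - a n)) ->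
    exists l : V, forall n, pi_div pi n (l - a n).

Definition complete_dvr (V : idomainType) (pi : V) : Prop :=
  is_dvr_uniformiser pi /\ pi_complete pi.

Section Born.
Variables (V : idomainType) (D : algType V).

Definition submodule (M : set D) : Prop :=
  [/\ M 0, (forall x y, M x -> M y -> M (x + y)) &
      (forall (a : V) x, M x -> M (a *: x))].

Definition span (G : set D) : set D :=
  [set x | forall M, submodule M -> G `<=` M -> M x].

Definition bornology (B : set (set D)) : Prop :=
  [/\ (forall s : seq D, B [set x | x \in s]),
      (forall S T, B S -> B T -> B (S `|` T)) &
      (forall S T, B T -> S `<=` T -> B S)].

Definition born_module (B : set (set D)) : Prop :=
  bornology B /\
  forall S, B S -> exists T, [/\ B T, submodule T & S `<=` T].

Definition setmul (S T : set D) : set D :=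
  [set x | exists s t, [/\ S s, T t & x = s * t]].

Definition born_algebra (B : set (set D)) : Prop :=
  born_module B /\ forall S T, B S -> B T -> B (setmul S T).

Definition dagger_gens (pi : V) (S : set D) : set D :=
  [set x | exists (i : nat) (f : 'I_i.+1 -> D),
     (forall j, S (f j)) /\ x = pi ^+ i *: \prod_(j < i.+1) f j].

Definition semidagger (pi : V) (B : set (set D)) : Prop :=
  forall S, B S -> B (span (dagger_gens pi S)).

Definition compactoid (pi : V) (B : set (set D)) (S : set D) : Prop :=
  exists T, [/\ B T, submodule T, S `<=` T &
    forall n : nat, exists F : seq D,
      (forall x, x \in F -> T x) /\
      S `<=` [set z | exists a t, [/\ span [set x | x \in F] a, T t &
                                     z = a + pi ^+ n *: t]]].

Definition compactoid_bornology (pi : V) (B : set (set D)) : set (set D) :=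
  [set S | compactoid pi B S].

End Born.

From Pilot Require Import Defs.
From mathcomp Require Import all_boot all_order all_algebra.
From mathcomp Require Import boolp classical_sets.
From mathcomp Require Import zify.
Set Implicit Arguments. Unset Strict Implicit. Unset Printing Implicit Defensive.
Import Order.TTheory GRing.Theory Num.Theory.
Local Open Scope ring_scope.
Local Open Scope classical_set_scope.

(* Compactoid sets are tested on approximations: if [s_j = a_j + pi^n t_j]
   with [a_j] in the span of a finite set [F_j] and [t_j] in a bounded
   submodule [T_j], then [s_1 s_2 = a_1 a_2 + pi^n (a_1 t_2 + t_1 s_2)], which
   gives closure under products.
   For the semidagger property, let [S] be compactoid inside [T], put
   [U = T ∪ T T] and let [W] be the bounded submodule generated by the
   [pi^i u_0 ... u_i] with [u_j] in [U]. Multiplying the factors in pairs shows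
   [pi^e T^(m+1) ⊆ W] whenever [m <= 2e + 1]. Hence a generator
   [pi^i s_0 ... s_i] with [2n <= i + 1] lies in [pi^n W]; when [i + 1 < 2n],
   expanding every [s_j = a_j + pi^n t_j] approximates it modulo [pi^n W] by the
   span of the finitely many [pi^i f_0 ... f_i], [f_j] in [F_n], [i < 2n]. *)

(* Plain [span] would denote the span of mathcomp's [vector] library. *)
Local Notation span := Defs.span.

Section SpansAndProducts.
Variables (V : idomainType) (D : algType V).
Implicit Types (X Y M : set D).

Lemma span_submodule X : submodule (span X).
Proof.
split.
- by move=> M [].
- by move=> x y hx hy M hM hXM; case: (hM) => _ hD _; exact: hD (hx M hM hXM) (hy M hM hXM).
- by move=> a x hx M hM hXM; case: (hM) => _ _ hZ; exact: hZ (hx M hM hXM).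
Qed.

Lemma span_incl X : X `<=` span X.
Proof. by move=> x hx M _; apply. Qed.

Lemma span_min X M : submodule M -> X `<=` M -> span X `<=` M.
Proof. by move=> hM hXM x; apply. Qed.

Lemma span_mono X Y : X `<=` Y -> span X `<=` span Y.
Proof. by move=> hXY; apply: span_min (span_submodule Y) _ => x /hXY /span_incl. Qed.

Lemma span0 X : span X 0.
Proof. by case: (span_submodule X). Qed.

Lemma spanD X x y : span X x -> span X y -> span X (x + y).
Proof. by case: (span_submodule X) => _ + _; apply. Qed.

Lemma spanZ X (a : V) x : span X x -> span X (a *: x).
Proof. by case: (span_submodule X) => _ _; apply. Qed.

Lemma submodule_scale_preimage M (c : V) :
  submodule M -> submodule [set r | M (c *: r)].
Proof.
case=> h0 hD hZ; split => /=.
- by rewrite scaler0.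
- by move=> x y hx hy; rewrite scalerDr; exact: hD.
- by move=> a x hx; rewrite scalerA mulrC -scalerA; exact: hZ.
Qed.

Lemma span_scale (c : V) X Y :
  (forall x, X x -> span Y (c *: x)) -> forall x, span X x -> span Y (c *: x).
Proof. by apply: span_min; apply/submodule_scale_preimage/span_submodule. Qed.

Lemma setmul_mono X X' Y Y' :
  X `<=` X' -> Y `<=` Y' -> setmul X Y `<=` setmul X' Y'.
Proof. by move=> hX hY _ [x [y [hx hy ->]]]; exists x, y; split; [exact: hX | exact: hY |]. Qed.

Lemma span_mul X Y a b : span X a -> span Y b -> span (setmul X Y) (a * b).
Proof.
move: a b; suff: span X `<=` [set a | forall b, span Y b -> span (setmul X Y) (a * b)].
  by move=> hX a b ha hb; exact: hX _ ha _ hb.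
apply: span_min.
  split => /=.
  - by move=> b _; rewrite mul0r; exact: span0.
  - by move=> x y hx hy b hb; rewrite mulrDl; apply: spanD; [exact: hx | exact: hy].
  - by move=> c x hx b hb; rewrite -scalerAl; apply: spanZ; exact: hx.
move=> x hx /=; apply: span_min.
  split => /=.
  - by rewrite mulr0; exact: span0.
  - by move=> y z hy hz; rewrite mulrDr; exact: spanD.
  - by move=> c y hy; rewrite -scalerAr; exact: spanZ.
by move=> y hy; apply: span_incl; exists x, y.
Qed.

Lemma setmul_seq (F1 F2 : seq D) :
  setmul [set` F1] [set` F2] = [set` [seq x * y | x <- F1, y <- F2]].
Proof.
apply/seteqP; split => z /=.
  by move=> [x [y [hx hy ->]]]; exact: allpairs_f.
by move/allpairsP => [[x y] [hx hy ->]]; exists x, y.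
Qed.

Fixpoint setpow X (m : nat) : set D :=
  if m is m.+1 then setmul X (setpow X m) else [set 1].

Fixpoint seqpow (F : seq D) (m : nat) : seq D :=
  if m is m.+1 then [seq x * y | x <- F, y <- seqpow F m] else [:: 1].

Lemma setpow_mono X Y m : X `<=` Y -> setpow X m `<=` setpow Y m.
Proof. by move=> hXY; elim: m => [|m IH] //=; apply: setmul_mono. Qed.

Lemma setpow_seq (F : seq D) m : setpow [set` F] m = [set` seqpow F m].
Proof.
elim: m => [|m /= ->]; last exact: setmul_seq.
by apply/seteqP; split => x /=; rewrite mem_seq1 => /eqP.
Qed.

Lemma setpowP X m y :
  setpow X m y <-> exists f : 'I_m -> D, (forall j, X (f j)) /\ y = \prod_(j < m) f j.
Proof.
elim: m y => [|m IH] y /=.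
  split=> [->|[f [_ ->]]]; last by rewrite big_ord0.
  by exists (fun _ => 0); split; [case | rewrite big_ord0].
split.
  move=> [s [z [hs /IH [f [hf ->]] ->]]].
  exists (fun j => if unlift ord0 j is Some k then f k else s); split.
    by move=> j /=; case: (unlift ord0 j).
  rewrite big_ord_recl unlift_none; congr (_ * _).
  by apply: eq_bigr => j _; rewrite liftK.
move=> [f [hf ->]]; rewrite big_ord_recl.
exists (f ord0), (\prod_(j < m) f (lift ord0 j)); split => //.
by apply/IH; exists (f \o lift ord0); split => // j; exact: hf.
Qed.

Lemma setpow_pair X k :
  setpow X k.*2.+1 `<=` setpow (X `|` setmul X X) k.+1 /\
  setpow X k.*2.+2 `<=` setpow (X `|` setmul X X) k.+1.
Proof.
have pair Z : setmul X (setmul X Z) `<=` setmul (X `|` setmul X X) Z.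
  move=> _ [x1 [_ [h1 [x2 [z [h2 hz ->]]] ->]]].
  by exists (x1 * x2), z; split => //; [right; exists x1, x2 | rewrite mulrA].
elim: k => [|k [IHodd IHeven]].
  split; last exact: pair.
  by apply: setmul_mono => // x hx; left.
by split => y /pair; apply: setmul_mono.
Qed.

Lemma setpow_half X m : setpow X m.+1 `<=` setpow (X `|` setmul X X) (m./2).+1.
Proof.
set k := m./2; have [IHodd IHeven] := setpow_pair X k.
by have := odd_double_half m; rewrite -/k; case: (odd m) => <-.
Qed.

End SpansAndProducts.

Section Approximation.
Variables (V : idomainType) (D : algType V) (pi : V).
Implicit Types (X S T G : set D).

Definition approx G (c : V) T : set D :=
  [set z | exists a t, [/\ span G a, T t & z = a + c *: t]].

(* [compactoid pi B S] unfolds to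
   [exists T, [/\ B T, submodule T, S `<=` T & approx_by T S]]. *)
Definition approx_by T S : Prop :=
  forall n : nat, exists F : seq D,
    (forall x, x \in F -> T x) /\ S `<=` approx [set` F] (pi ^+ n) T.

Lemma approx_mono G G' c T T' : G `<=` G' -> T `<=` T' -> approx G c T `<=` approx G' c T'.
Proof.
by move=> hG hT _ [a [t [ha ht ->]]]; exists a, t; split => //; [exact: span_mono ha | exact: hT].
Qed.

Lemma approx_submodule G c T : submodule T -> submodule (approx G c T).
Proof.
case=> h0 hD hZ; split => /=.
- by exists 0, 0; split => //; [exact: span0 | rewrite scaler0 addr0].
- move=> _ _ [a [t [ha ht ->]]] [a' [t' [ha' ht' ->]]].
  exists (a + a'), (t + t'); split; [exact: spanD | exact: hD |].
  by rewrite scalerDr addrACA.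
- move=> b _ [a [t [ha ht ->]]]; exists (b *: a), (b *: t); split; [exact: spanZ | exact: hZ |].
  by rewrite scalerDr !scalerA mulrC.
Qed.

Lemma approx_setmul G1 G2 T1 T2 S1 S2 c :
  G1 `<=` T1 -> S2 `<=` T2 ->
  S1 `<=` approx G1 c T1 -> S2 `<=` approx G2 c T2 ->
  setmul S1 S2 `<=` approx (setmul G1 G2) c (span (setmul T1 T2)).
Proof.
move=> hG1 hST2 hS1 hS2 _ [s1 [s2 [/hS1 [a [t [ha ht ->]]] h2 ->]]].
have [b [u [hb hu hs2]]] := hS2 _ h2.
exists (a * b), (a * u + t * s2); split.
- exact: span_mul.
- apply: spanD; last by apply: span_incl; exists t, s2; split => //; exact: hST2.
  by apply: span_mono (span_mul ha (span_incl hu)); apply: setmul_mono.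
- by rewrite mulrDl -scalerAl {1}hs2 mulrDr -scalerAr scalerDr addrA.
Qed.

Lemma approx_setpow G T S c :
  G `<=` T -> S `<=` T -> S `<=` approx G c T ->
  forall m, setpow S m `<=` approx (setpow G m) c (span (setpow T m)).
Proof.
move=> hGT hST hS; elim=> [|m IH] /=.
  by move=> _ ->; exists 1, 0; split; [exact: span_incl | exact: span0 | rewrite scaler0 addr0].
apply: subset_trans (approx_setmul hGT _ hS IH) _.
  by move=> y /(setpow_mono hST) /span_incl.
apply: approx_mono => //; apply: span_min (span_submodule _) _.
by move=> _ [t [r [ht hr ->]]]; apply: span_mul hr; exact: span_incl.
Qed.

Lemma approx_by_mono T T' S S' : T `<=` T' -> S' `<=` S -> approx_by T S -> approx_by T' S'.
Proof.
move=> hT hS happ n; have [F [hF hSF]] := happ n.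
exists F; split; first by move=> x /hF /hT.
by move=> x /hS /hSF; apply: approx_mono.
Qed.

Lemma approx_by_seq T (s : seq D) :
  T 0 -> (forall x, x \in s -> T x) -> approx_by T [set` s].
Proof.
move=> hT0 hsT n; exists s; split => // z hz.
by exists z, 0; split => //; [exact: span_incl | rewrite scaler0 addr0].
Qed.

Lemma approx_by_setU T S1 S2 : approx_by T S1 -> approx_by T S2 -> approx_by T (S1 `|` S2).
Proof.
move=> h1 h2 n; have [F1 [hF1 c1]] := h1 n; have [F2 [hF2 c2]] := h2 n.
exists (F1 ++ F2); split.
  by move=> x; rewrite mem_cat => /orP [/hF1 | /hF2].
by move=> z [/c1 | /c2]; apply: approx_mono => // x /=; rewrite mem_cat => ->; rewrite ?orbT.
Qed.

Lemma approx_by_span T S : submodule T -> approx_by T S -> approx_by T (span S).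
Proof.
move=> hT happ n; have [F [hF hSF]] := happ n.
by exists F; split => //; apply: span_min => //; exact: approx_submodule.
Qed.

Lemma approx_by_setmul T1 T2 S1 S2 :
  S2 `<=` T2 -> approx_by T1 S1 -> approx_by T2 S2 ->
  approx_by (span (setmul T1 T2)) (setmul S1 S2).
Proof.
move=> hST2 h1 h2 n; have [F1 [hF1 c1]] := h1 n; have [F2 [hF2 c2]] := h2 n.
exists [seq x * y | x <- F1, y <- F2]; split.
  move=> _ /allpairsP [[x y] [hx hy ->]].
  by apply: span_incl; exists x, y; split; [exact: hF1 | exact: hF2 |].
by rewrite -setmul_seq; exact: approx_setmul.
Qed.

Lemma dagger_gens_mono X Y : X `<=` Y -> dagger_gens pi X `<=` dagger_gens pi Y.
Proof. by move=> hXY _ [i [f [hf ->]]]; exists i, f; split => // j; apply: hXY. Qed.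

Lemma span_dagger_gens_setpow T e m y : (m <= e.*2.+1)%N -> setpow T m.+1 y ->
  span (dagger_gens pi (T `|` setmul T T)) (pi ^+ e *: y).
Proof.
move=> hme /setpow_half /setpowP [f [hf ->]].
have -> : pi ^+ e *: \prod_(j < (m./2).+1) f j =
          pi ^+ (e - m./2) *: (pi ^+ m./2 *: \prod_(j < (m./2).+1) f j).
  by rewrite scalerA -exprD subnK //; lia.
by apply: spanZ; apply: span_incl; exists m./2, f.
Qed.

Lemma approx_by_dagger_gens T S : S `<=` T -> approx_by T S ->
  approx_by (span (dagger_gens pi (T `|` setmul T T))) (dagger_gens pi S).
Proof.
move=> hST happ n; have [F [hFT hSF]] := happ n.
have hFpow i : [set` seqpow F i] `<=` setpow T i.
  by rewrite -setpow_seq; exact: setpow_mono.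
exists [seq pi ^+ i *: y | i <- iota 0 n.*2, y <- seqpow F i.+1]; split.
  move=> _ /allpairsPdep [i [y [_ hy ->]]].
  by apply: span_dagger_gens_setpow (hFpow _ _ hy); lia.
move=> _ [i [f [hf ->]]].
have hy : setpow S i.+1 (\prod_(j < i.+1) f j) by apply/setpowP; exists f.
case: (leqP n.*2 i.+1) => hni.
  exists 0, (pi ^+ (i - n) *: \prod_(j < i.+1) f j); split.
  - exact: span0.
  - by apply: span_dagger_gens_setpow (setpow_mono hST hy); lia.
  - by rewrite add0r scalerA -exprD subnKC //; lia.
have [P [r [hP hr ->]]] := approx_setpow hFT hST hSF hy.
exists (pi ^+ i *: P), (pi ^+ i *: r); split.
- apply: span_scale hP => y; rewrite setpow_seq => hy'.
  by apply: span_incl; apply/allpairsPdep; exists i, y; rewrite mem_iota; split => //; lia.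
- by apply: span_scale hr => z /span_dagger_gens_setpow; apply; lia.
- by rewrite scalerDr !scalerA mulrC.
Qed.

End Approximation.

Section CompactoidBornology.
Variables (V : idomainType) (pi : V) (D : algType V) (B : set (set D)).

Lemma compactoid_bornology_module :
  born_module B -> born_module (compactoid_bornology pi B).
Proof.
move=> [[hfin hU _] hmod]; split; first split.
- move=> s; have [T [hT sT hsT]] := hmod _ (hfin s).
  by exists T; split => //; apply: approx_by_seq => //; case: sT.
- move=> S1 S2 [T1 [hT1 _ hST1 hS1]] [T2 [hT2 _ hST2 hS2]].
  have [T [hT sT hTT]] := hmod _ (hU _ _ hT1 hT2).
  have [hT1T hT2T] : T1 `<=` T /\ T2 `<=` T by split => x hx; apply: hTT; [left | right].
  exists T; split => //; first by move=> x [/hST1/hT1T | /hST2/hT2T].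
  by apply: approx_by_setU; [exact: approx_by_mono hS1 | exact: approx_by_mono hS2].
- move=> S1 S2 [T [hT sT hST hS]] h12; exists T; split => //.
    exact: subset_trans hST.
  exact: approx_by_mono hS.
- move=> S [T [hT sT hST hS]]; exists (span S); split.
  + by exists T; split => //; [exact: span_min | exact: approx_by_span].
  + exact: span_submodule.
  + exact: span_incl.
Qed.

Lemma compactoid_setmul S1 S2 : born_algebra B ->
  compactoid pi B S1 -> compactoid pi B S2 -> compactoid pi B (setmul S1 S2).
Proof.
move=> [[_ hmod] hmul] [T1 [hT1 _ hST1 hS1]] [T2 [hT2 _ hST2 hS2]].
have [T [hT sT hTT]] := hmod _ (hmul _ _ hT1 hT2).
exists T; split => //.
  by apply: subset_trans hTT; exact: setmul_mono.
by apply: approx_by_mono (approx_by_setmul hST2 hS1 hS2) => //; exact: span_min.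
Qed.

Lemma compactoid_semidagger : born_algebra B ->
  semidagger pi B -> semidagger pi (compactoid_bornology pi B).
Proof.
move=> [[[_ hU _] _] hmul] hdag S [T [hT _ hST hS]].
exists (span (dagger_gens pi (T `|` setmul T T))); split.
- by apply/hdag/hU => //; exact: hmul.
- exact: span_submodule.
- by apply: span_mono; apply: dagger_gens_mono => x /hST; left.
- by apply: approx_by_span (span_submodule _) _; exact: approx_by_dagger_gens.
Qed.

End CompactoidBornology.

Theorem lemma4p7 (V : idomainType) (pi : V) (hV : complete_dvr pi)
  (D : algType V) (B : set (set D)) (hB : born_algebra B) :
  born_algebra (compactoid_bornology pi B) /\
  (semidagger pi B -> semidagger pi (compactoid_bornology pi B)).
Proof.
split; last exact: compactoid_semidagger.
split; first by apply: compactoid_bornology_module; case: hB.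
by move=> S1 S2; exact: compactoid_setmul.
Qed.
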